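(* Let $\tilde n\ge 1$, and let $\mathbf{S}_{i^*},\mathbf{S}_{2}\in\mathbb{R}^{\tilde n\times\tilde n}$ be two real matrices (the graph matrix of the reference view and the graph matrix of the view to be aligned). Let $\boldsymbol{\Delta}=\{\mathbf{P}\in[0,1]^{\tilde n\times\tilde n}:\ \mathbf{P}\mathbf{1}=\mathbf{1},\ \mathbf{P}^{\top}\mathbf{1}=\mathbf{1}\}$ be the set of doubly stochastic matrices, and let $\boldsymbol{\Gamma}:\mathbb{R}^{\tilde n\times\tilde n}\to\boldsymbol{\Delta}$ be the Euclidean (Frobenius-norm) projection onto $\boldsymbol{\Delta}$. Starting from any $\mathbf{P}^{(0)}\in\boldsymbol{\Delta}$, define the iterates $$\mathbf{P}^{(t+1)}=\tfrac12\Big(\mathbf{P}^{(t)}+\boldsymbol{\Gamma}\big(\mathbf{S}_{2}\,\mathbf{P}^{(t)}\,\mathbf{S}_{i^*}^{\top}\big)\Big),\qquad t=0,1,2,\dots$$ Suppose there is a constant $\varepsilon\ge 0$ such that $\|\mathbf{S}_{i^*}\otimes\mathbf{S}_{2}\|_2\le\varepsilon$, where $\otimes$ is the Kronecker product and $\|\cdot\|_2$ the spectral norm. Then the iteration converges at rate $\tfrac12+\varepsilon$, i.e. for every $t\ge1$, $$\|\mathbf{P}^{(t+1)}-\mathbf{P}^{(t)}\|_F\le\Big(\tfrac12+\varepsilon\Big)\|\mathbf{P}^{(t)}-\mathbf{P}^{(t-1)}\|_F .$$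
   Context: This iteration is a projected fixed-point scheme for the relaxed graph-matching problem $\max_{\mathbf{P}\in\boldsymbol{\Delta}}\operatorname{Tr}(\mathbf{S}_{i^*}^{\top}\mathbf{P}^{\top}\mathbf{S}_{2}\mathbf{P})$, whose gradient (up to a constant) is $\mathbf{S}_{2}\mathbf{P}\mathbf{S}_{i^*}^{\top}$. $\|\cdot\|_F$ denotes the Frobenius norm. *)

From mathcomp Require Import all_boot all_order all_algebra.
From mathcomp Require Import mxtens.
From mathcomp Require Import classical_sets reals.
Set Implicit Arguments. Unset Strict Implicit. Unset Printing Implicit Defensive.
Import Order.TTheory GRing.Theory Num.Theory.
Local Open Scope ring_scope.

Definition frob {R : realType} {m n : nat} (A : 'M[R]_(m, n)) : R :=
  Num.sqrt (\sum_(i < m) \sum_(j < n) A i j ^+ 2).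

Definition specnorm {R : realType} {m n : nat} (M : 'M[R]_(m, n)) : R :=
  sup [set frob (M *m v) | v in [set v : 'cV[R]_n | frob v <= 1]]%classic.

(* Kronecker product (standard: (A (x) B)_{(i1,i2),(j1,j2)} = A i1 j1 * B i2 j2). *)
Definition kron {R : realType} {m n p q : nat} (A : 'M[R]_(m, n)) (B : 'M[R]_(p, q))
  : 'M[R]_(m * p, n * q) := tensmx A B.

Definition doubly_stochastic {R : realType} {n : nat} (P : 'M[R]_n) : Prop :=
  (forall i j, 0 <= P i j <= 1) /\
  (forall i, \sum_(j < n) P i j = 1) /\
  (forall j, \sum_(i < n) P i j = 1).

Definition is_proj_DS {R : realType} {n : nat} (Gamma : 'M[R]_n -> 'M[R]_n) : Prop :=
  forall X : 'M[R]_n, doubly_stochastic (Gamma X) /\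
    (forall Q : 'M[R]_n, doubly_stochastic Q -> frob (X - Gamma X) <= frob (X - Q)).

(* The Frobenius projection onto the convex set of doubly stochastic matrices
   is nonexpansive, and vec (S2 X Si^T) = (Si (x) S2) vec X, so the map
   X |-> Gamma (S2 X Si^T) is eps-Lipschitz for the Frobenius norm.
   Consecutive differences of the averaged iteration therefore contract by
   the factor 1/2 + eps/2 <= 1/2 + eps. *)
From mathcomp Require Import all_boot all_order all_algebra.
From mathcomp Require Import mxtens.
From mathcomp Require Import classical_sets reals.
From mathcomp Require Import ring lra.
Import Order.TTheory GRing.Theory Num.Theory.
Local Open Scope ring_scope.
Local Open Scope classical_set_scope.

Section FrobeniusNorm.
Context {R : realType}.

Definition frob2 {m n : nat} (A : 'M[R]_(m, n)) : R :=
  \sum_(i < m) \sum_(j < n) A i j ^+ 2.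

Definition frobdot {m n : nat} (A B : 'M[R]_(m, n)) : R :=
  \sum_(i < m) \sum_(j < n) A i j * B i j.

Lemma cauchy_schwarz (I : finType) (a b : I -> R) :
  (\sum_i a i * b i) ^+ 2 <= (\sum_i a i ^+ 2) * (\sum_i b i ^+ 2).
Proof.
set A := \sum_i a i ^+ 2; set B := \sum_i b i ^+ 2; set C := \sum_i a i * b i.
have B_ge0 : 0 <= B by apply: sumr_ge0 => i _; exact: sqr_ge0.
have [B0 | B_neq0] := eqVneq B 0.
  have b0 i : b i = 0.
    apply/eqP; rewrite -sqrf_eq0; apply/eqP.
    exact: (psumr_eq0P (fun j _ => sqr_ge0 (b j)) B0).
  by rewrite /C big1 ?expr0n ?B0 ?mulr0 // => i _; rewrite b0 mulr0.
have : 0 <= B * (A * B - C ^+ 2).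
  have : 0 <= \sum_i (B * a i - C * b i) ^+ 2.
    by apply: sumr_ge0 => i _; exact: sqr_ge0.
  rewrite (eq_bigr (fun i => B ^+ 2 * a i ^+ 2 - (2 * B * C) * (a i * b i)
                             + C ^+ 2 * b i ^+ 2)); last by move=> i _; ring.
  rewrite big_split /= sumrB -!mulr_sumr -/A -/B -/C.
  by congr (0 <= _); ring.
by rewrite pmulr_rge0 ?subr_ge0 // lt_def B_neq0.
Qed.

Section FixedShape.
Context {m n : nat}.
Implicit Types A B : 'M[R]_(m, n).

Lemma frob2_ge0 A : 0 <= frob2 A.
Proof. by apply: sumr_ge0 => i _; apply: sumr_ge0 => j _; exact: sqr_ge0. Qed.

Lemma frob_ge0 A : 0 <= frob A.
Proof. exact: sqrtr_ge0. Qed.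

Lemma sqr_frob A : frob A ^+ 2 = frob2 A.
Proof. by rewrite sqr_sqrtr // frob2_ge0. Qed.

Lemma ler_frob A B : (frob A <= frob B) = (frob2 A <= frob2 B).
Proof. by rewrite ler_sqrt // frob2_ge0. Qed.

Lemma frob2D A B : frob2 (A + B) = frob2 A + 2 * frobdot A B + frob2 B.
Proof.
rewrite /frob2 /frobdot mulr_sumr -!big_split; apply: eq_bigr => i _.
by rewrite mulr_sumr -!big_split /=; apply: eq_bigr => j _; rewrite !mxE; ring.
Qed.

Lemma frob2Z c A : frob2 (c *: A) = c ^+ 2 * frob2 A.
Proof.
rewrite /frob2 mulr_sumr; apply: eq_bigr => i _.
by rewrite mulr_sumr; apply: eq_bigr => j _; rewrite !mxE; ring.
Qed.

Lemma frobdotZr c A B : frobdot A (c *: B) = c * frobdot A B.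
Proof.
rewrite /frobdot mulr_sumr; apply: eq_bigr => i _.
by rewrite mulr_sumr; apply: eq_bigr => j _; rewrite !mxE; ring.
Qed.

Lemma frobZ c A : frob (c *: A) = `|c| * frob A.
Proof. by rewrite /frob -/(frob2 _) frob2Z sqrtrM ?sqr_ge0 // sqrtr_sqr. Qed.

Lemma frobdot_le A B : frobdot A B <= frob A * frob B.
Proof.
have cs : frobdot A B ^+ 2 <= (frob A * frob B) ^+ 2.
  by rewrite exprMn !sqr_frob /frobdot /frob2 !pair_big; exact: cauchy_schwarz.
have := mulr_ge0 (frob_ge0 A) (frob_ge0 B); nra.
Qed.

Lemma ler_frobD A B : frob (A + B) <= frob A + frob B.
Proof.
rewrite -(ger0_norm (addr_ge0 (frob_ge0 A) (frob_ge0 B))) -sqrtr_sqr.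
rewrite ler_sqrt ?sqr_ge0 // -/(frob2 _) frob2D -!sqr_frob.
have := frobdot_le A B; have := frob_ge0 A; have := frob_ge0 B; nra.
Qed.

End FixedShape.

Lemma frob_mulmx_le {m n} (A : 'M[R]_(m, n)) (v : 'cV[R]_n) :
  frob (A *m v) <= frob A * frob v.
Proof.
rewrite -(ger0_norm (mulr_ge0 (frob_ge0 A) (frob_ge0 v))) -sqrtr_sqr.
rewrite ler_sqrt ?sqr_ge0 // exprMn !sqr_frob /frob2 mulr_suml.
apply: ler_sum => i _; rewrite big_ord1 !mxE.
under [X in _ <= _ * X]eq_bigr do rewrite big_ord1.
exact: cauchy_schwarz.
Qed.

Lemma frob_mulmx_specnorm {m n} (A : 'M[R]_(m, n)) (v : 'cV[R]_n) :
  frob (A *m v) <= specnorm A * frob v.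
Proof.
have [v0 | v_neq0] := eqVneq (frob v) 0.
  by have := frob_mulmx_le A v; rewrite v0 !mulr0.
have v_gt0 : 0 < frob v by rewrite lt_def v_neq0 frob_ge0.
have bounded :
    has_ubound [set frob (A *m u) | u in [set u : 'cV[R]_n | frob u <= 1]].
  exists (frob A) => _ [u u_le1 <-].
  by rewrite (le_trans (frob_mulmx_le A u)) // ler_piMr ?frob_ge0.
have : frob (A *m ((frob v)^-1 *: v)) <= specnorm A.
  apply: (ub_le_sup bounded); exists ((frob v)^-1 *: v) => //=.
  by rewrite frobZ ger0_norm ?invr_ge0 ?frob_ge0 // mulVf.
rewrite -scalemxAr frobZ ger0_norm ?invr_ge0 ?frob_ge0 //.
by rewrite ler_pdivrMl // mulrC.
Qed.

End FrobeniusNorm.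

Section Vectorization.
Context {R : realType}.

Definition vecmx {m n : nat} (X : 'M[R]_(m, n)) : 'cV[R]_(n * m) :=
  \col_k X (mxtens_unindex k).2 (mxtens_unindex k).1.

Lemma sum_mxtens_index m n (F : 'I_(m * n) -> R) :
  \sum_k F k = \sum_(i < m) \sum_(j < n) F (mxtens_index (i, j)).
Proof.
rewrite pair_big (reindex (@mxtens_index m n)) /=.
  by apply: eq_bigr => -[i j].
exact: onW_bij (Bijective (@mxtens_indexK m n) (@mxtens_unindexK m n)).
Qed.

Lemma frob_vecmx {m n} (X : 'M[R]_(m, n)) : frob (vecmx X) = frob X.
Proof.
rewrite /frob sum_mxtens_index exchange_big /=.
by congr Num.sqrt; apply: eq_bigr => i _; apply: eq_bigr => j _;
  rewrite big_ord1 mxE mxtens_indexK.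
Qed.

Lemma kron_mulmx_vecmx {m n p q} (A : 'M[R]_(p, n)) (B : 'M[R]_(q, m))
    (X : 'M[R]_(m, n)) :
  kron A B *m vecmx X = vecmx (B *m X *m A^T).
Proof.
apply/matrixP => k l; case: (mxtens_indexP k) => i1 i2.
rewrite /kron !mxE sum_mxtens_index !mxtens_indexK /=.
apply: eq_bigr => j1 _; rewrite !mxE mulr_suml; apply: eq_bigr => j2 _.
by rewrite tensmxE !mxE mxtens_indexK /=; ring.
Qed.

Lemma frob_mulmx2_specnorm {m n p q} (A : 'M[R]_(p, n)) (B : 'M[R]_(q, m))
    (X : 'M[R]_(m, n)) :
  frob (B *m X *m A^T) <= specnorm (kron A B) * frob X.
Proof.
by rewrite -frob_vecmx -kron_mulmx_vecmx -(frob_vecmx X) frob_mulmx_specnorm.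
Qed.

End Vectorization.

Lemma ler0_of_le_small_scales (R : realFieldType) (c b : R) : 0 <= b ->
  (forall s, 0 < s <= 1 -> c <= s * b) -> c <= 0.
Proof.
move=> b_ge0 small; rewrite leNgt; apply/negP => c_gt0.
have cb_gt0 : 0 < c + b by lra.
have s_gt0 : 0 < c / (c + b) by rewrite divr_gt0.
have s_le1 : c / (c + b) <= 1 by rewrite ler_pdivrMr // mul1r lerDl.
have := small _ (introT andP (conj s_gt0 s_le1)).
rewrite mulrAC ler_pdivlMr //; nra.
Qed.

Section ConvexProjection.
Variables (R : realType) (m n : nat).
Variable C : 'M[R]_(m, n) -> Prop.
Variable proj : 'M[R]_(m, n) -> 'M[R]_(m, n).
Hypothesis C_convex :
  forall {p q} s, C p -> C q -> 0 <= s <= 1 -> C (p + s *: (q - p)).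
Hypothesis proj_mem : forall X, C (proj X).
Hypothesis proj_min : forall X {Q}, C Q -> frob (X - proj X) <= frob (X - Q).

Lemma proj_obtuse X Q : C Q -> frobdot (X - proj X) (Q - proj X) <= 0.
Proof.
move=> CQ; set U := X - proj X; set V := Q - proj X.
apply: (@ler0_of_le_small_scales _ _ (2^-1 * frob2 V)).
  by rewrite mulr_ge0 ?invr_ge0 ?frob2_ge0.
move=> s /andP[s_gt0 s_le1].
have s01 : 0 <= s <= 1 by rewrite ltW.
have := proj_min X (C_convex s (proj_mem X) CQ s01).
have -> : X - (proj X + s *: (Q - proj X)) = U + (- s) *: V.
  by rewrite /U /V scaleNr opprD addrA.
rewrite -/U ler_frob frob2D frob2Z frobdotZr => h.
have := frob2_ge0 V; nra.
Qed.

Lemma proj_nonexpansive X Y : frob (proj X - proj Y) <= frob (X - Y).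
Proof.
have obtX := proj_obtuse X _ (proj_mem Y).
have obtY := proj_obtuse Y _ (proj_mem X).
have decomp : frob2 (X - Y) = frob2 (proj X - proj Y)
    + frob2 ((X - Y) - (proj X - proj Y))
    - 2 * frobdot (X - proj X) (proj Y - proj X)
    - 2 * frobdot (Y - proj Y) (proj X - proj Y).
  rewrite /frob2 /frobdot !mulr_sumr -!big_split /= -!sumrB.
  apply: eq_bigr => i _; rewrite !mulr_sumr -!big_split /= -!sumrB.
  by apply: eq_bigr => j _; rewrite !mxE; ring.
rewrite ler_frob decomp.
have := frob2_ge0 ((X - Y) - (proj X - proj Y)); lra.
Qed.

End ConvexProjection.

Lemma doubly_stochastic_convex (R : realType) n (p q : 'M[R]_n) s :
  doubly_stochastic p -> doubly_stochastic q -> 0 <= s <= 1 ->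
  doubly_stochastic (p + s *: (q - p)).
Proof.
move=> [p01 [p_row p_col]] [q01 [q_row q_col]] /andP[s_ge0 s_le1].
have entry i j : (p + s *: (q - p)) i j = p i j + s * (q i j - p i j).
  by rewrite !mxE.
split; [|split].
- move=> i j; rewrite entry.
  have /andP[? ?] := p01 i j; have /andP[? ?] := q01 i j.
  by apply/andP; split; nra.
- move=> i; under eq_bigr do rewrite entry.
  by rewrite big_split /= -mulr_sumr sumrB p_row q_row subrr mulr0 addr0.
- move=> j; under eq_bigr do rewrite entry.
  by rewrite big_split /= -mulr_sumr sumrB p_col q_col subrr mulr0 addr0.
Qed.

Lemma proj_DS_nonexpansive {R : realType} {n} {Gamma : 'M[R]_n -> 'M[R]_n} :
  is_proj_DS Gamma -> forall X Y, frob (Gamma X - Gamma Y) <= frob (X - Y).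
Proof.
move=> hG X Y; apply: (@proj_nonexpansive _ _ _ doubly_stochastic).
- exact: doubly_stochastic_convex.
- by move=> Z; case: (hG Z).
- by move=> Z; case: (hG Z).
Qed.

Theorem theorem1 (R : realType) (n : nat) (hn : (1 <= n)%N)
  (Si S2 : 'M[R]_n) (Gamma : 'M[R]_n -> 'M[R]_n) (eps : R) (P : nat -> 'M[R]_n) :
  is_proj_DS Gamma ->
  doubly_stochastic (P 0%N) ->
  (forall t : nat, P t.+1 = 2^-1 *: (P t + Gamma (S2 *m P t *m Si^T))) ->
  0 <= eps ->
  specnorm (kron Si S2) <= eps ->
  forall t : nat, (1 <= t)%N ->
    frob (P t.+1 - P t) <= (2^-1 + eps) * frob (P t - P t.-1).
Proof.
move=> hG _ hP eps_ge0 hK [//|t] _ /=.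
set D := P t.+1 - P t.
set E := Gamma (S2 *m P t.+1 *m Si^T) - Gamma (S2 *m P t *m Si^T).
have step : P t.+2 - P t.+1 = 2^-1 *: D + 2^-1 *: E.
  by rewrite [P t.+2]hP /D /E (hP t); apply/matrixP => i j; rewrite !mxE; ring.
have lipschitz : frob E <= eps * frob D.
  rewrite (le_trans (proj_DS_nonexpansive hG _ _)) // -mulmxBl -mulmxBr.
  rewrite (le_trans (frob_mulmx2_specnorm _ _ _)) //.
  by rewrite ler_wpM2r ?frob_ge0.
rewrite step (le_trans (ler_frobD _ _)) // !frobZ ger0_norm ?invr_ge0 ?ler0n //.
have := mulr_ge0 eps_ge0 (frob_ge0 D); lra.
Qed.
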